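(* Let $k\ge1$ be an integer, $G$ a graph and $A,B\subseteq V(G)$ with $\mathrm{dist}(A,B)>2^k$ and \[\mathrm{tp}_k\big(G\langle X\mapsto A\rangle[N_{2^{k-1}-1}[A]]\big)=\mathrm{tp}_k\big(G\langle X\mapsto B\rangle[N_{2^{k-1}-1}[B]]\big).\] Then for every first-order formula $\varphi(x)$ of quantifier rank at most $k-1$ in the signature of $G$, \[G\langle A\rangle\models\exists x\in A\ \varphi(x)\iff G\langle B\rangle\models\exists x\in B\ \varphi(x).\]
   Context: Graphs are finite, loopless, undirected, with finitely many unary color predicates. $\mathrm{dist}(A,B)$ is the minimum distance between a vertex of $A$ and a vertex of $B$; $N_r[S]$ is the set of vertices at distance at most $r$ from $S$. $G\langle X\mapsto W\rangle$ is $G$ expanded by a new unary predicate $X$ interpreted as $W$; $G\langle W\rangle$ is the expansion by a new unary predicate named $W$ interpreted as $W$; $\exists x\in W\,\psi$ abbreviates $\exists x\,(W(x)\wedge\psi)$. $H[S]$ denotes the induced substructure. $\mathrm{tp}_k(H)$ is the set of first-order sentences of quantifier rank at most $k$ true in $H$. *)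

From mathcomp Require Import all_boot.
Set Implicit Arguments. Unset Strict Implicit. Unset Printing Implicit Defensive.

Record struct (m : nat) := Struct {
  carrier : finType;
  radj : rel carrier;
  rcol : 'I_m -> {set carrier} }.
Arguments carrier {m}. Arguments radj {m}. Arguments rcol {m}.

Inductive formula (m : nat) : Type :=
  | FTrue | FFalse
  | FEq of nat & nat
  | FAdj of nat & nat
  | FCol of 'I_m & nat
  | FNot of formula m
  | FAnd of formula m & formula m
  | FOr of formula m & formula m
  | FEx of nat & formula m
  | FAll of nat & formula m.

Arguments FTrue {m}. Arguments FFalse {m}.
Arguments FEq {m}. Arguments FAdj {m}.

Fixpoint qr m (f : formula m) : nat :=
  match f with
  | FNot g => qr g
  | FAnd g h | FOr g h => maxn (qr g) (qr h)
  | FEx _ g | FAll _ g => (qr g).+1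
  | _ => 0
  end.

Fixpoint free m (f : formula m) (y : nat) : bool :=
  match f with
  | FTrue | FFalse => false
  | FEq i j | FAdj i j => (y == i) || (y == j)
  | FCol _ i => y == i
  | FNot g => free g y
  | FAnd g h | FOr g h => free g y || free h y
  | FEx x g | FAll x g => (y != x) && free g y
  end.

Definition sentence m (f : formula m) := forall y, ~~ free f y.

Definition upd (V : Type) (env : nat -> option V) (x : nat) (v : V) :=
  fun y => if y == x then Some v else env y.

(* Satisfaction; the (partial) assignment is an option-valued environment,
   so that structures with empty universe are handled correctly. *)
Fixpoint sat m (H : struct m) (f : formula m) (env : nat -> option (carrier H))
  : Prop :=
  match f with
  | FTrue => True
  | FFalse => False
  | FEq i j => match env i, env j with Some a, Some b => a = b | _, _ => False end
  | FAdj i j => match env i, env j with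
                | Some a, Some b => radj H a b | _, _ => False end
  | FCol c i => match env i with Some a => a \in rcol H c | None => False end
  | FNot g => ~ @sat m H g env
  | FAnd g h => @sat m H g env /\ @sat m H h env
  | FOr g h => @sat m H g env \/ @sat m H h env
  | FEx x g => exists v, @sat m H g (upd env x v)
  | FAll x g => forall v, @sat m H g (upd env x v)
  end.

Definition models m (H : struct m) (f : formula m) :=
  @sat m H f (fun _ => None).

Definition tp_eq m (k : nat) (H1 H2 : struct m) :=
  forall f : formula m, sentence f -> qr f <= k -> (models H1 f <-> models H2 f).

Definition graph_struct m (T : finType) (e : rel T) (col : 'I_m -> {set T}) :
  struct m := @Struct m T e col.

Definition expand m (T : finType) (col : 'I_m -> {set T}) (W : {set T}) :
  'I_m.+1 -> {set T} :=
  fun i => match unlift ord_max i with Some j => col j | None => W end.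

Definition induced m (H : struct m) (S : {set carrier H}) : struct m :=
  @Struct m {x : carrier H | x \in S}
     (fun x y => radj H (val x) (val y))
     (fun c => [set x | val x \in rcol H c]).
Arguments induced {m} H S.

Fixpoint lift_sig m (f : formula m) : formula m.+1 :=
  match f with
  | FTrue => FTrue | FFalse => FFalse
  | FEq i j => FEq i j | FAdj i j => FAdj i j
  | FCol c i => FCol (widen_ord (leqnSn m) c) i
  | FNot g => FNot (lift_sig g)
  | FAnd g h => FAnd (lift_sig g) (lift_sig h)
  | FOr g h => FOr (lift_sig g) (lift_sig h)
  | FEx x g => FEx x (lift_sig g)
  | FAll x g => FAll x (lift_sig g)
  end.

Definition ex_in_new m (x : nat) (phi : formula m) : formula m.+1 :=
  FEx x (FAnd (FCol ord_max x) (lift_sig phi)).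

Fixpoint walk_le (T : finType) (e : rel T) (r : nat) (x y : T) : bool :=
  match r with
  | 0 => x == y
  | r'.+1 => walk_le e r' x y || [exists z, walk_le e r' x z && e z y]
  end.

Definition nbhd (T : finType) (e : rel T) (r : nat) (S : {set T}) : {set T} :=
  [set y | [exists x in S, walk_le e r x y]].

Definition dist_gt (T : finType) (e : rel T) (A B : {set T}) (d : nat) :=
  forall a b, a \in A -> b \in B -> ~~ walk_le e d a b.

From mathcomp Require Import all_boot zify.
From Stdlib Require Import Classical.

Set Implicit Arguments. Unset Strict Implicit. Unset Printing Implicit Defensive.

(* Pick u in A with G |= phi(u).  Duplicator wins the (k-1)-round
   Ehrenfeucht-Fraisse game on (G, u) and (G, v), for a suitable v in B, by
   swapping the neighbourhoods of A and B.  As the local structures around A and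
   B have the same k-type, Duplicator wins the local game opened by u, with some
   answer v in B.  Later, a move with q rounds left that lies within 2^q - 1 of A
   or within 2^q of a pebble on the A side is answered through the local game
   (symmetrically for B), and every other move is copied.  The radii keep all
   local pebbles inside the balls of radius 2^(k-1) - 1, and the zone where a
   move is answered locally is definable by a formula of rank q, so the local
   answer lands in the corresponding zone of the other side.  Since
   dist(A, B) > 2^k, vertices from different sides, and a local vertex and a
   copied one, are never equal or adjacent, so atomic formulas are preserved. *)

Section Walks.
Variables (T : finType) (e : rel T).

Lemma walk_leS n x y : walk_le e n x y -> walk_le e n.+1 x y.
Proof. by move=> h; rewrite /= h. Qed.

Lemma walk_le_mono n n' x y : n <= n' -> walk_le e n x y -> walk_le e n' x y.
Proof.
move=> le_nn'; rewrite -(subnKC le_nn').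
by elim: (n' - n) => [|d IH] h; rewrite ?addn0 ?addnS ?walk_leS ?IH.
Qed.

Lemma walk_le_refl n x : walk_le e n x x.
Proof. exact: (@walk_le_mono 0) (eqxx x). Qed.

Lemma walk_le1 x y : walk_le e 1 x y = (x == y) || e x y.
Proof.
congr (_ || _); apply/existsP/idP => [[z /andP [/eqP -> ->]] //|exy].
by exists x; rewrite eqxx.
Qed.

Lemma walk_le_trans n r x y z :
  walk_le e n x y -> walk_le e r y z -> walk_le e (n + r) x z.
Proof.
move=> wxy; elim: r z => [|r IH] z /=; first by move/eqP <-; rewrite addn0.
rewrite addnS /= => /orP [wyz|/existsP [w /andP [wyw ewz]]]; first by rewrite IH.
by apply/orP; right; apply/existsP; exists w; rewrite IH.
Qed.

Lemma walk_le_split n r x z :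
  walk_le e (n + r) x z -> exists2 y, walk_le e n x y & walk_le e r y z.
Proof.
elim: r z => [|r IH] z; first by rewrite addn0 => wxz; exists z; rewrite /=.
rewrite addnS /= => /orP [/IH [y wxy wyz]|/existsP [w /andP [/IH [y wxy wyw] ewz]]].
  by exists y; rewrite // wyz.
by exists y => //; apply/orP; right; apply/existsP; exists w; rewrite wyw.
Qed.

Lemma nbhdP r (W : {set T}) y :
  reflect (exists2 a, a \in W & walk_le e r a y) (y \in nbhd e r W).
Proof.
rewrite inE; apply: (iffP existsP) => [[a /andP [aW way]]|[a aW way]]; exists a => //.
by rewrite aW.
Qed.

Lemma nbhd_id r (W : {set T}) : {subset W <= nbhd e r W}.
Proof. by move=> a aW; apply/nbhdP; exists a; rewrite ?walk_le_refl. Qed.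

Lemma nbhd_walk r n (W : {set T}) x y :
  x \in nbhd e r W -> walk_le e n x y -> y \in nbhd e (r + n) W.
Proof.
by move=> /nbhdP [a aW wax] wxy; apply/nbhdP; exists a; rewrite ?(walk_le_trans wax).
Qed.

Lemma nbhd_mono r r' (W : {set T}) : r <= r' -> {subset nbhd e r W <= nbhd e r' W}.
Proof.
by move=> le_rr' y /nbhdP [a aW way]; apply/nbhdP; exists a; rewrite ?(walk_le_mono le_rr').
Qed.

Hypothesis e_sym : symmetric e.

Lemma walk_le_sym n x y : walk_le e n x y -> walk_le e n y x.
Proof.
elim: n x y => [|n IH] x y /=; first by rewrite eq_sym.
move=> /orP [wxy|/existsP [w /andP [wxw ewy]]]; first by rewrite IH.
have wyw : walk_le e 1 y w by rewrite walk_le1 e_sym ewy orbT.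
by have := walk_le_trans wyw (IH _ _ wxw); rewrite add1n.
Qed.

Lemma dist_gt_sym (A B : {set T}) d : dist_gt e A B d -> dist_gt e B A d.
Proof. by move=> dAB b a bB aA; apply: contra (dAB a b aA bB); apply: walk_le_sym. Qed.

End Walks.
Arguments nbhd_id {T e r W x}.

Section InducedWalks.
Variables (m : nat) (H : struct m) (S : {set carrier H}).

Lemma walk_le_induced_val n (p p' : carrier (induced H S)) :
  walk_le (radj (induced H S)) n p p' -> walk_le (radj H) n (val p) (val p').
Proof.
elim: n p' => [|n IH] p' /=; first by move/eqP ->.
move=> /orP [wpp'|/existsP [w /andP [wpw ewp']]]; first by rewrite IH.
by apply/orP; right; apply/existsP; exists (val w); rewrite IH.
Qed.

Lemma walk_le_induced n (p p' : carrier (induced H S)) :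
  (forall c, walk_le (radj H) n (val p) c -> c \in S) ->
  walk_le (radj H) n (val p) (val p') -> walk_le (radj (induced H S)) n p p'.
Proof.
elim: n p' => [|n IH] p' inS /=; first by move/eqP/val_inj ->.
have inS' c : walk_le (radj H) n (val p) c -> c \in S by move/walk_leS; apply: inS.
move=> /orP [wpp'|/existsP [w /andP [wpw ewp']]]; first by rewrite IH.
apply/orP; right; apply/existsP; exists (Sub w (inS' _ wpw)).
by rewrite IH ?SubK.
Qed.

End InducedWalks.

Lemma upd_same V (env : nat -> option V) x v : upd env x v x = Some v.
Proof. by rewrite /upd eqxx. Qed.

Lemma upd_other V (env : nat -> option V) x v y : y != x -> upd env x v y = env y.
Proof. by rewrite /upd => /negbTE ->. Qed.

Notation sat_in H := (@sat _ H).

Fixpoint dist_le_form {m} (j x y : nat) : formula m :=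
  match j with
  | 0 => FOr (FEq x y) (FAdj x y)
  | j.+1 => FEx (maxn x y).+1
      (FAnd (dist_le_form j x (maxn x y).+1) (dist_le_form j (maxn x y).+1 y))
  end.

Fixpoint mark_dist_form {m} (j x : nat) : formula m.+1 :=
  match j with
  | 0 => FCol ord_max x
  | j.+1 => FEx x.+1 (FAnd (mark_dist_form j x.+1) (dist_le_form j x.+1 x))
  end.

Fixpoint pebble_dist_form {m} (j x n : nat) : formula m :=
  match n with
  | 0 => FFalse
  | n.+1 => FOr (dist_le_form j n x) (pebble_dist_form j x n)
  end.

Definition zone_form {m} (j x : nat) : formula m.+1 :=
  FOr (mark_dist_form j x) (pebble_dist_form j x x).

Lemma qr_dist_le_form m j x y : qr (@dist_le_form m j x y) = j.
Proof. by elim: j x y => [|j IH] x y //=; rewrite !IH maxnn. Qed.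

Lemma qr_mark_dist_form m j x : qr (@mark_dist_form m j x) = j.
Proof. by elim: j x => [|j IH] x //=; rewrite IH qr_dist_le_form maxnn. Qed.

Lemma qr_zone_form m j x : qr (@zone_form m j x) = j.
Proof.
suff qr_peb n : qr (@pebble_dist_form m.+1 j x n) <= j.
  by rewrite /= qr_mark_dist_form; apply/maxn_idPl.
by elim: n => [|n IH] //=; rewrite geq_max qr_dist_le_form leqnn.
Qed.

Lemma free_dist_le_form m j x y v : free (@dist_le_form m j x y) v -> v = x \/ v = y.
Proof.
elim: j x y => [|j IH] x y /=; first by rewrite orbb => /orP [/eqP|/eqP]; [left|right].
move=> /andP [vz /orP [/IH [->|vE]|/IH [vE|->]]]; auto; by rewrite vE eqxx in vz.
Qed.

Lemma free_mark_dist_form m j x v : free (@mark_dist_form m j x) v -> v = x.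
Proof.
elim: j x => [|j IH] x /=; first by move/eqP.
by move=> /andP [vx /orP [/IH vE|/free_dist_le_form [vE|//]]]; rewrite vE eqxx in vx.
Qed.

Lemma free_pebble_dist_form m j x n v :
  free (@pebble_dist_form m j x n) v -> v < n \/ v = x.
Proof.
by elim: n => [|n IH] //= /orP [/free_dist_le_form [->|->]|/IH [/ltnW|->]]; auto.
Qed.

Lemma free_zone_form m j x v : free (@zone_form m j x) v -> v <= x.
Proof.
by move=> /orP [/free_mark_dist_form ->|/free_pebble_dist_form [/ltnW|->]].
Qed.

Lemma sat_dist_le_form m (H : struct m) j x y env :
  sat_in H (dist_le_form j x y) env <->
  exists a b, [/\ env x = Some a, env y = Some b & walk_le (radj H) (2 ^ j) a b].
Proof.
elim: j x y env => [|j IH] x y env; rewrite [sat_in H _ _]/=.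
  rewrite expn0; split=> [|[a [b [-> -> ]]]]; last first.
    by rewrite walk_le1 => /orP [/eqP|]; [left|right].
  case: (env x) => [a|]; case: (env y) => [b|] => eab; try by case: eab.
  by exists a, b; split; rewrite // walk_le1; case: eab => [->|->]; rewrite ?eqxx ?orbT.
set z := (maxn x y).+1.
have xz : x != z by rewrite neq_ltn ltnS leq_maxl.
have yz : y != z by rewrite neq_ltn ltnS leq_maxr.
have -> : 2 ^ j.+1 = 2 ^ j + 2 ^ j by rewrite expnS mul2n addnn.
split=> [[c [/IH [a [c1 [ea ec1 wac]]] /IH [c2 [b [ec2 eb wcb]]]]]|].
  rewrite upd_other // in ea; rewrite upd_other // in eb.
  rewrite !upd_same in ec1 ec2; move: wac wcb; case: ec1 => <-; case: ec2 => <- wac wcb.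
  by exists a, b; split; rewrite ?(walk_le_trans wac).
move=> [a [b [ea eb /walk_le_split [c wac wcb]]]].
by exists c; split; apply/IH; [exists a, c|exists c, b]; rewrite upd_same upd_other.
Qed.

Lemma sat_mark_dist_form m (H : struct m.+1) j x env :
  sat_in H (mark_dist_form j x) env <->
  exists2 p, env x = Some p &
    exists2 a, a \in rcol H ord_max & walk_le (radj H) (2 ^ j - 1) a p.
Proof.
elim: j x env => [|j IH] x env; rewrite [sat_in H _ _]/=.
  rewrite expn0 subnn; split => [|[p -> [a aX /eqP <-]]] //.
  by case: (env x) => [p pX|//]; exists p => //; exists p; rewrite ?walk_le_refl.
have xx1 : x != x.+1 by rewrite neq_ltn ltnSn.
have -> : 2 ^ j.+1 - 1 = (2 ^ j - 1) + 2 ^ j.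
  by have := expn_gt0 2 j; rewrite expnS; lia.
split=> [[c [/IH [c1 ec1 [a aX wac]] /sat_dist_le_form [c2 [p [ec2 ep wcp]]]]]|].
  rewrite upd_other // in ep; rewrite !upd_same in ec1 ec2.
  move: wac wcp; case: ec1 => <-; case: ec2 => <- wac wcp.
  by exists p => //; exists a; rewrite ?(walk_le_trans wac).
move=> [p ep [a aX /walk_le_split [c wac wcp]]].
exists c; split; first by apply/IH; exists c; rewrite ?upd_same //; exists a.
by apply/sat_dist_le_form; exists c, p; rewrite upd_same upd_other.
Qed.

Lemma sat_pebble_dist_form m (H : struct m) j x n env :
  sat_in H (pebble_dist_form j x n) env <->
  exists2 i, i < n & sat_in H (dist_le_form j i x) env.
Proof.
elim: n => [|n IH] /=; first by split => // [[]].
split => [[sn|/IH [i lt_in si]]|[i]]; first by exists n.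
  by exists i => //; apply: ltnW.
rewrite ltnS leq_eqVlt => /orP [/eqP -> sn|lt_in si]; first by left.
by right; apply/IH; exists i.
Qed.

Lemma sat_zone_form m (H : struct m.+1) j x (h : nat -> option (carrier H)) w :
  sat_in H (zone_form j x) (upd h x w) <->
  (exists2 a, a \in rcol H ord_max & walk_le (radj H) (2 ^ j - 1) a w) \/
  (exists i p, [/\ i < x, h i = Some p & walk_le (radj H) (2 ^ j) p w]).
Proof.
split => [[/sat_mark_dist_form|/sat_pebble_dist_form]|].
- by rewrite upd_same => [[p [<-] aw]]; left.
- move=> [i lt_ix /sat_dist_le_form [p [w' [ep ew wpw]]]].
  rewrite upd_same in ew; rewrite upd_other in ep; last by rewrite neq_ltn lt_ix.
  by right; exists i, p; move: wpw; case: ew => <-.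
- move=> [aw|[i [p [lt_ix ep wpw]]]]; [left|right].
    by apply/sat_mark_dist_form; exists w; rewrite ?upd_same.
  apply/sat_pebble_dist_form; exists i => //; apply/sat_dist_le_form.
  by exists p, w; rewrite upd_same upd_other // neq_ltn lt_ix.
Qed.

Definition env_equiv m (H1 H2 : struct m) q N
    (h1 : nat -> option (carrier H1)) (h2 : nat -> option (carrier H2)) :=
  forall f : formula m, qr f <= q -> (forall y, free f y -> y < N) ->
    (sat_in H1 f h1 <-> sat_in H2 f h2).
Arguments env_equiv {m} H1 H2 q N h1 h2.

Section EnvEquiv.
Variables (m : nat) (H1 H2 : struct m).

Lemma env_equiv_sym q N h1 h2 : env_equiv H1 H2 q N h1 h2 -> env_equiv H2 H1 q N h2 h1.
Proof. by move=> eqv f fq fN; symmetry; apply: eqv. Qed.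

Lemma env_equiv_le q q' N h1 h2 :
  q' <= q -> env_equiv H1 H2 q N h1 h2 -> env_equiv H1 H2 q' N h1 h2.
Proof. by move=> le_q'q eqv f fq; apply: eqv; apply: leq_trans le_q'q. Qed.

(* If no [v] worked, the conjunction [F] of formulas separating [u] from each of
   the finitely many [v] would make [FEx N F] true at [h1] but false at [h2]. *)
Lemma env_equiv_forth q N h1 h2 :
  env_equiv H1 H2 q.+1 N h1 h2 -> forall u, exists v,
    env_equiv H1 H2 q N.+1 (upd h1 N u) (upd h2 N v).
Proof.
move=> eqv u; apply: NNPP => no_v.
pose small (f : formula m) := qr f <= q /\ forall y, free f y -> y < N.+1.
have separate v : exists f, [/\ small f, sat_in H1 f (upd h1 N u)
                                & ~ sat_in H2 f (upd h2 N v)].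
  apply: NNPP => no_f; apply: no_v; exists v => f fq fN.
  split=> sf; apply: NNPP => nsf; apply: no_f; [exists f|exists (FNot f)]; by split.
have [F [[Fq FN] Fu Fv]] : exists F, [/\ small F, sat_in H1 F (upd h1 N u)
    & forall v, v \in enum (carrier H2) -> ~ sat_in H2 F (upd h2 N v)].
  elim: (enum _) => [|v s [F [[Fq FN] Fu Fv]]]; first by exists FTrue.
  have [f [[fq fN] fu fv]] := separate v.
  exists (FAnd f F); split => [|//|w].
    by split => [|y /orP [/fN|/FN]] //=; rewrite geq_max fq.
  by rewrite inE => /orP [/eqP -> [/fv]|/Fv nFw [_ /nFw]].
have FexN y : free (FEx N F) y -> y < N.
  by move=> /andP [yN /FN]; rewrite ltnS leq_eqVlt (negbTE yN).
have [v /Fv] := (eqv (FEx N F) Fq FexN).1 (ex_intro _ u Fu).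
by rewrite mem_enum; apply.
Qed.

End EnvEquiv.

Section Locality.
Variables (m : nat) (T : finType) (e : rel T) (col : 'I_m -> {set T}) (k : nat).
Hypotheses (e_sym : symmetric e) (k_gt0 : 0 < k).

Definition G := graph_struct e col.
Definition marked (W : {set T}) := graph_struct e (expand col W).
Definition local_radius := 2 ^ k.-1 - 1.
Definition local (W : {set T}) := induced (marked W) (nbhd e local_radius W).
Definition env (W : {set T}) := nat -> option (carrier (local W)).

(* With [q] rounds left, every pebble lies within [pebble_radius q] of its side:
   the first pebble is on the side itself ([q = k.-1]), and a pebble placed with
   [q] rounds left is at most [2 ^ q] away from an earlier one. *)
Definition pebble_radius q := 2 ^ k.-1 - 2 ^ q.

Lemma pebble_radius_le_local q : pebble_radius q <= local_radius.
Proof. by rewrite leq_sub2l // expn_gt0. Qed.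

Lemma pebble_radiusS q : pebble_radius q.+1 <= pebble_radius q.
Proof. by rewrite leq_sub2l // leq_exp2l. Qed.

Lemma pebble_radius_step q : q.+1 <= k.-1 -> pebble_radius q.+1 + 2 ^ q <= pebble_radius q.
Proof.
rewrite /pebble_radius -(leq_exp2l _ _ (isT : 1 < 2)) expnS.
by have := expn_gt0 2 q; lia.
Qed.

Lemma mark_radius_le q : q.+1 <= k.-1 -> 2 ^ q - 1 <= pebble_radius q.
Proof.
rewrite /pebble_radius -(leq_exp2l _ _ (isT : 1 < 2)) expnS.
by have := expn_gt0 2 q; lia.
Qed.

Lemma local_radius_sep : local_radius + 1 + local_radius <= 2 ^ k.
Proof.
rewrite /local_radius -(prednK k_gt0) expnS prednK //.
by have := expn_gt0 2 k.-1; lia.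
Qed.

Lemma expand_widen W (c : 'I_m) : expand col W (widen_ord (leqnSn m) c) = col c.
Proof.
have -> : widen_ord (leqnSn m) c = lift ord_max c.
  by apply: val_inj; rewrite /= /bump leqNgt ltn_ord.
by rewrite /expand liftK.
Qed.

Lemma expand_max W : expand col W ord_max = W.
Proof. by rewrite /expand unlift_none. Qed.

Lemma sat_lift W (phi : formula m) g :
  sat_in (marked W) (lift_sig phi) g <-> sat_in G phi g.
Proof.
elim: phi g => [||i j|i j|c i|f IH|f IHf g IHg|f IHf g IHg|x f IH|x f IH] g' /=;
  rewrite ?expand_widen ?IH ?IHf ?IHg //.
- by split=> [[v /IH]|[v /IH]]; exists v.
- by split=> sf v; apply/IH.
Qed.

Lemma walk_le_local W d n (p p' : carrier (local W)) :
  val p \in nbhd e d W -> d + n <= local_radius ->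
  walk_le e n (val p) (val p') -> walk_le (radj (local W)) n p p'.
Proof.
by move=> pW le_dn; apply: walk_le_induced => c /(nbhd_walk pW) /(nbhd_mono le_dn).
Qed.

Definition pebbles_near W r (h : env W) := forall i p, h i = Some p -> val p \in nbhd e r W.
Arguments pebbles_near : clear implicits.

(* The vertices where a move with [q] rounds left is answered in the local game
   around [W]. *)
Definition zone W q N (h : env W) (w : T) :=
  w \in nbhd e (2 ^ q - 1) W \/
  exists i p, [/\ i < N, h i = Some p & walk_le e (2 ^ q) (val p) w].
Arguments zone : clear implicits.

Definition far A B q N (h1 : env A) (h2 : env B) (w : T) :=
  ~ zone A q N h1 w /\ ~ zone B q N h2 w.
Arguments far : clear implicits.

Lemma zone_grow W q N h u w :
  zone W q N h u -> walk_le e (2 ^ q) u w -> zone W q.+1 N h w.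
Proof.
have E : 2 ^ q.+1 = 2 ^ q + 2 ^ q by rewrite expnS mul2n addnn.
move=> [uW|[i [p [iN hi wpu]]]] wuw; [left|right].
  have le_r : 2 ^ q - 1 + 2 ^ q <= 2 ^ q.+1 - 1 by rewrite E; have := expn_gt0 2 q; lia.
  exact: (nbhd_mono le_r (nbhd_walk uW wuw)).
by exists i, p; split; rewrite // E (walk_le_trans wpu).
Qed.

Lemma zone_mono W q N h w : zone W q N h w -> zone W q.+1 N h w.
Proof. by move/zone_grow; apply; apply: walk_le_refl. Qed.

Lemma zone_add_pebble W q N h p w :
  zone W q N.+1 (upd h N p) w -> zone W q N h w \/ walk_le e (2 ^ q) (val p) w.
Proof.
move=> [wW|[i [p' [iN hi wp'w]]]]; first by left; left.
case: (eqVneq i N) hi wp'w => [->|neq_iN]; first by rewrite upd_same => [[<-]]; right.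
rewrite upd_other // => hi wp'w; left; right; exists i, p'; split => //.
by rewrite ltn_neqAle neq_iN -ltnS.
Qed.

Lemma not_zone_add_pebble W q N h p w :
  zone W q N h (val p) -> ~ zone W q.+1 N h w -> ~ zone W q N.+1 (upd h N p) w.
Proof. by move=> zp nzw /zone_add_pebble [/zone_mono|/(zone_grow zp)]. Qed.

Lemma far_apart W q N h w i p :
  ~ zone W q N h w -> i < N -> h i = Some p ->
  ~~ walk_le e 1 (val p) w /\ ~~ walk_le e 1 w (val p).
Proof.
move=> nzw iN hi; suff npw : ~~ walk_le e 1 (val p) w.
  by split => //; apply: contra npw; apply: walk_le_sym.
apply/negP => /(walk_le_mono (expn_gt0 2 q)) wpw.
by apply: nzw; right; exists i, p.
Qed.

Lemma zone_sub_nbhd W q N h w :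
  q.+1 <= k.-1 -> pebbles_near W (pebble_radius q.+1) h ->
  zone W q N h w -> w \in nbhd e (pebble_radius q) W.
Proof.
move=> lt_qk near [wW|[i [p [_ hi wpw]]]]; first exact: (nbhd_mono (mark_radius_le lt_qk) wW).
exact: (nbhd_mono (pebble_radius_step lt_qk) (nbhd_walk (near _ _ hi) wpw)).
Qed.

Lemma pebbles_near_add W q N h p :
  q.+1 <= k.-1 -> pebbles_near W (pebble_radius q.+1) h -> zone W q N h (val p) ->
  pebbles_near W (pebble_radius q) (upd h N p).
Proof.
move=> lt_qk near zp i p'; case: (eqVneq i N) => [->|neq_iN].
  by rewrite upd_same => [[<-]]; apply: zone_sub_nbhd zp.
by rewrite upd_other // => /near /(nbhd_mono (pebble_radiusS q)).
Qed.

(* The hypotheses keep the walks witnessing the zone inside the ball of radius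
   [local_radius], so that they are walks of the local structure. *)
Lemma sat_zone_form_local W q N h (p : carrier (local W)) :
  q.+1 <= k.-1 -> pebbles_near W (pebble_radius q.+1) h ->
  sat_in (local W) (zone_form q N) (upd h N p) <-> zone W q N h (val p).
Proof.
move=> lt_qk near; rewrite sat_zone_form.
have le_mark : 0 + (2 ^ q - 1) <= local_radius.
  exact: leq_trans (mark_radius_le lt_qk) (pebble_radius_le_local q).
have le_peb := leq_trans (pebble_radius_step lt_qk) (pebble_radius_le_local q).
split=> [[[a aX /walk_le_induced_val wap]|[i [p' [iN hi /walk_le_induced_val wp'p]]]]|].
- by move: aX; rewrite inE /= expand_max => aW; left; apply/nbhdP; exists (val a).
- by right; exists i, p'.
move=> [/nbhdP [a aW wap]|[i [p' [iN hi wp'p]]]]; [left|right].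
  exists (Sub a (nbhd_id aW)); first by rewrite inE /= expand_max.
  by apply: (@walk_le_local W 0) le_mark _; rewrite ?SubK ?nbhd_id.
by exists i, p'; split; rewrite // (walk_le_local (near _ _ hi) le_peb).
Qed.

Definition paired A B N (h1 : env A) (h2 : env B) (a b : option T) :=
  exists i p1 p2, [/\ i < N, h1 i = Some p1, h2 i = Some p2 &
    (a, b) = (Some (val p1), Some (val p2)) \/ (a, b) = (Some (val p2), Some (val p1))].
Arguments paired : clear implicits.

(* A position of the Ehrenfeucht-Fraisse game on two copies of [G] with [q] rounds
   left. *)
Record inv A B q N (h1 : env A) (h2 : env B) (g1 g2 : nat -> option T) : Prop := {
  inv_rank : q <= k.-1;
  inv_equiv : env_equiv (local A) (local B) q N h1 h2;
  inv_near1 : pebbles_near A (pebble_radius q) h1;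
  inv_near2 : pebbles_near B (pebble_radius q) h2;
  inv_vars : forall y, paired A B N h1 h2 (g1 y) (g2 y) \/
    (g1 y = g2 y /\ forall w, g1 y = Some w -> far A B q N h1 h2 w) }.
Arguments inv : clear implicits.

Lemma inv_swap_sides A B q N h1 h2 g1 g2 :
  inv A B q N h1 h2 g1 g2 -> inv B A q N h2 h1 g1 g2.
Proof.
case=> rank eqv near1 near2 vars; split => //; first exact: env_equiv_sym.
move=> y; case: (vars y) => [[i [p1 [p2 [iN e1 e2 [E|E]]]]]|[g12 farw]].
- by left; exists i, p2, p1; split; rewrite // E; right.
- by left; exists i, p2, p1; split; rewrite // E; left.
- by right; split => // w /farw [].
Qed.

Lemma inv_swap_envs A B q N h1 h2 g1 g2 :
  inv A B q N h1 h2 g1 g2 -> inv A B q N h1 h2 g2 g1.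
Proof.
case=> rank eqv near1 near2 vars; split => // y.
case: (vars y) => [[i [p1 [p2 [iN e1 e2 [[-> ->]|[-> ->]]]]]]|[g12 farw]].
- by left; exists i, p1, p2; split => //; right.
- by left; exists i, p1, p2; split => //; left.
- by right; split; rewrite -g12.
Qed.

Lemma inv_add_pebble A B q N h1 h2 g1 g2 x (p1 : carrier (local A)) (p2 : carrier (local B)) :
  inv A B q.+1 N h1 h2 g1 g2 ->
  env_equiv (local A) (local B) q N.+1 (upd h1 N p1) (upd h2 N p2) ->
  zone A q N h1 (val p1) -> zone B q N h2 (val p2) ->
  inv A B q N.+1 (upd h1 N p1) (upd h2 N p2) (upd g1 x (val p1)) (upd g2 x (val p2)).
Proof.
case=> lt_qk _ near1 near2 vars eqv z1 z2; split.
- exact: ltnW.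
- exact: eqv.
- exact: pebbles_near_add.
- exact: pebbles_near_add.
move=> y; case: (eqVneq y x) => [->|neq_yx]; rewrite ?upd_same ?upd_other //.
  by left; exists N, p1, p2; rewrite !upd_same; split => //; left.
case: (vars y) => [[i [q1 [q2 [iN e1 e2 E]]]]|[g12 farw]]; [left|right].
  have neq_iN : i != N by rewrite neq_ltn iN.
  by exists i, q1, q2; rewrite !upd_other // ltnW.
split=> // w /farw [nz1 nz2].
by split; apply: not_zone_add_pebble.
Qed.

Lemma inv_add_far A B q N h1 h2 g1 g2 x u :
  inv A B q.+1 N h1 h2 g1 g2 -> far A B q N h1 h2 u ->
  inv A B q N h1 h2 (upd g1 x u) (upd g2 x u).
Proof.
case=> lt_qk eqv near1 near2 vars faru; split.
- exact: ltnW.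
- exact: env_equiv_le eqv.
- by move=> i p /near1 /(nbhd_mono (pebble_radiusS q)).
- by move=> i p /near2 /(nbhd_mono (pebble_radiusS q)).
move=> y; case: (eqVneq y x) => [->|neq_yx]; rewrite ?upd_same ?upd_other //.
  by right; split => // w [<-].
case: (vars y) => [|[g12 farw]]; [by left|right].
by split=> // w /farw [nz1 nz2]; split => /zone_mono.
Qed.

Lemma inv_move_near A B q N h1 h2 g1 g2 x u :
  inv A B q.+1 N h1 h2 g1 g2 -> zone A q N h1 u ->
  exists N' h1' h2' v, inv A B q N' h1' h2' (upd g1 x u) (upd g2 x v).
Proof.
move=> I zu; case: (I) => lt_qk eqv near1 near2 _.
have uN : u \in nbhd e local_radius A.
  exact: (nbhd_mono (pebble_radius_le_local q) (zone_sub_nbhd lt_qk near1 zu)).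
pose p1 : carrier (local A) := Sub u uN.
have [p2 eqv'] := env_equiv_forth eqv p1.
have z2 : zone B q N h2 (val p2).
  apply/(sat_zone_form_local N _ lt_qk near2)/(eqv' (zone_form q N)).
  - by rewrite qr_zone_form.
  - by move=> y /free_zone_form.
  by apply/(sat_zone_form_local N _ lt_qk near1).
by exists N.+1, (upd h1 N p1), (upd h2 N p2), (val p2); apply: inv_add_pebble.
Qed.

Lemma inv_move A B q N h1 h2 g1 g2 x u :
  inv A B q.+1 N h1 h2 g1 g2 ->
  exists N' h1' h2' v, inv A B q N' h1' h2' (upd g1 x u) (upd g2 x v).
Proof.
move=> I; case: (classic (zone A q N h1 u)) => [zA|nzA]; first exact: inv_move_near I zA.
case: (classic (zone B q N h2 u)) => [zB|nzB]; last first.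
  by exists N, h1, h2, u; apply: inv_add_far.
have [N' [h2' [h1' [v /inv_swap_sides I']]]] := inv_move_near x (inv_swap_sides I) zB.
by exists N', h1', h2', v.
Qed.

Section Transfer.
Variables A B : {set T}.
Hypothesis dist_AB : dist_gt e A B (2 ^ k).

Lemma local_apart (p1 : carrier (local A)) (p2 : carrier (local B)) :
  ~~ walk_le e 1 (val p1) (val p2) /\ ~~ walk_le e 1 (val p2) (val p1).
Proof.
suff apart12 : ~~ walk_le e 1 (val p1) (val p2).
  by split => //; apply: contra apart12; apply: walk_le_sym.
case/nbhdP: (valP p1) => a aA wa1; case/nbhdP: (valP p2) => b bB wb2.
apply/negP => w12; have := walk_le_trans (walk_le_trans wa1 w12) (walk_le_sym e_sym wb2).
by move/(walk_le_mono local_radius_sep); apply/negP; apply: dist_AB.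
Qed.

Definition rel_at (R : T -> T -> Prop) (g : nat -> option T) i j :=
  match g i, g j with Some a, Some b => R a b | _, _ => False end.

(* Atomic relations [R] are transferred because they only hold between vertices
   at distance at most one: a pebble from the [A] side is never related to one from
   the [B] side, nor a pebble to a far vertex. *)
Lemma inv_rel_at (R : T -> T -> Prop) (F : nat -> nat -> formula m.+1)
    q N h1 h2 g1 g2 i j :
  (forall x y, R x y -> walk_le e 1 x y) ->
  (forall a b, qr (F a b) = 0) ->
  (forall a b y, free (F a b) y -> y = a \/ y = b) ->
  (forall W (h : env W) a b p p', h a = Some p -> h b = Some p' ->
     sat_in (local W) (F a b) h <-> R (val p) (val p')) ->
  inv A B q N h1 h2 g1 g2 -> rel_at R g1 i j <-> rel_at R g2 i j.
Proof.
move=> R1 qrF freeF satF [_ eqv _ _ vars].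
have unrelated x y : ~~ walk_le e 1 x y -> ~~ walk_le e 1 y x -> ~ R x y /\ ~ R y x.
  by move=> /negP nxy /negP nyx; split => /R1.
have far_unrelated a p1 p2 w : a < N -> h1 a = Some p1 -> h2 a = Some p2 ->
    far A B q N h1 h2 w ->
    [/\ ~ R (val p1) w, ~ R w (val p1), ~ R (val p2) w & ~ R w (val p2)].
  move=> aN e1 e2 [nz1 nz2].
  have [n1 n1'] := far_apart nz1 aN e1; have [n2 n2'] := far_apart nz2 aN e2.
  by have [? ?] := unrelated _ _ n1 n1'; have [? ?] := unrelated _ _ n2 n2'.
rewrite /rel_at.
case: (vars i) => [[a [p1 [p2 [aN e1 e2 Ei]]]]|[-> fari]];
  case: (vars j) => [[b [q1 [q2 [bN f1 f2 Ej]]]]|[-> farj]].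
- have same : R (val p1) (val q1) <-> R (val p2) (val q2).
    rewrite -(satF _ _ _ _ _ _ e1 f1) -(satF _ _ _ _ _ _ e2 f2).
    by apply: eqv => [|y /freeF [->|->]] //; rewrite qrF.
  have := unrelated _ _ (local_apart p1 q2).1 (local_apart p1 q2).2.
  have := unrelated _ _ (local_apart q1 p2).1 (local_apart q1 p2).2.
  by case: Ei Ej => [[-> ->]|[-> ->]] [[-> ->]|[-> ->]]; tauto.
- case: (g2 j) farj => [w /(_ w erefl) /(far_unrelated _ _ _ _ aN e1 e2) [? ? ? ?]|_];
    by case: Ei => [[-> ->]|[-> ->]]; tauto.
- case: (g2 i) fari => [w /(_ w erefl) /(far_unrelated _ _ _ _ bN f1 f2) [? ? ? ?]|_ //].
  by case: Ej => [[-> ->]|[-> ->]]; tauto.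
- by [].
Qed.

Lemma inv_col_at q N h1 h2 g1 g2 c i :
  inv A B q N h1 h2 g1 g2 -> sat_in G (FCol c i) g1 <-> sat_in G (FCol c i) g2.
Proof.
case=> _ eqv _ _ vars; case: (vars i) => [[a [p1 [p2 [aN e1 e2 Ei]]]]|[/= -> //]].
have same : val p1 \in col c <-> val p2 \in col c.
  have := eqv (FCol (widen_ord (leqnSn m) c) a) (leq0n _).
  rewrite /= e1 e2 !inE !expand_widen; apply => y /eqP ->.
  exact: aN.
by rewrite /=; case: Ei => [[-> ->]|[-> ->]]; [exact: same|exact: iff_sym same].
Qed.

Lemma inv_sat (phi : formula m) q N h1 h2 g1 g2 :
  inv A B q N h1 h2 g1 g2 -> qr phi <= q -> (sat_in G phi g1 <-> sat_in G phi g2).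
Proof.
elim: phi q N h1 h2 g1 g2 => [||i j|i j|c i|f IH|f IHf g IHg|f IHf g IHg|x f IH|x f IH]
  q N h1 h2 g1 g2 I //= qphi.
- apply: (inv_rel_at (R := fun a b => a = b) (F := fun a b => FEq a b)) I => //.
  + by move=> x y ->; rewrite walk_le_refl.
  + by move=> a b y /orP [/eqP|/eqP]; [left|right].
  + by move=> W h a b p p' /= -> ->; split => [->|/val_inj].
- apply: (inv_rel_at (R := fun a b => e a b) (F := fun a b => FAdj a b)) I => //.
  + by move=> x y exy; rewrite walk_le1 exy orbT.
  + by move=> a b y /orP [/eqP|/eqP]; [left|right].
  + by move=> W h a b p p' /= -> ->.
- exact: inv_col_at I.
- by rewrite (IH _ _ _ _ _ _ I qphi).
- by move: qphi; rewrite geq_max => /andP [/(IHf _ _ _ _ _ _ I) -> /(IHg _ _ _ _ _ _ I) ->].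
- by move: qphi; rewrite geq_max => /andP [/(IHf _ _ _ _ _ _ I) -> /(IHg _ _ _ _ _ _ I) ->].
- case: q I qphi => [|q] I //= qf; split=> [[u su]|[v sv]].
    have [N' [h1' [h2' [v I']]]] := inv_move x u I.
    by exists v; apply/(IH _ _ _ _ _ _ I' qf).
  have [N' [h1' [h2' [u /inv_swap_envs I']]]] := inv_move x v (inv_swap_envs I).
  by exists u; apply/(IH _ _ _ _ _ _ I' qf).
- case: q I qphi => [|q] I //= qf; split=> sf u.
    have [N' [h1' [h2' [v /inv_swap_envs I']]]] := inv_move x u (inv_swap_envs I).
    by apply/(IH _ _ _ _ _ _ I' qf).
  have [N' [h1' [h2' [v I']]]] := inv_move x u I.
  by apply/(IH _ _ _ _ _ _ I' qf).
Qed.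

Lemma inv_init x (p1 : carrier (local A)) (p2 : carrier (local B)) :
  val p1 \in A -> val p2 \in B ->
  env_equiv (local A) (local B) k.-1 1 (upd (fun _ => None) 0 p1) (upd (fun _ => None) 0 p2) ->
  inv A B k.-1 1 (upd (fun _ => None) 0 p1) (upd (fun _ => None) 0 p2)
    (upd (fun _ => None) x (val p1)) (upd (fun _ => None) x (val p2)).
Proof.
have near_init W (p : carrier (local W)) :
    val p \in W -> pebbles_near W (pebble_radius k.-1) (upd (fun _ => None) 0 p).
  by move=> pW i p'; rewrite /upd; case: (i == 0) => //; case=> <-; apply: nbhd_id.
move=> p1A p2B eqv; split => //; try exact: near_init.
move=> y; case: (eqVneq y x) => [->|neq_yx]; rewrite ?upd_same ?upd_other //.
  by left; exists 0, p1, p2; rewrite !upd_same; split => //; left.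
by right; split.
Qed.

Lemma exists_in_transfer (phi : formula m) x :
  tp_eq k (local A) (local B) -> qr phi <= k.-1 ->
  models (marked A) (ex_in_new x phi) -> models (marked B) (ex_in_new x phi).
Proof.
move=> tpAB qphi [u []]; rewrite /= upd_same expand_max => uA /sat_lift su.
pose p1 : carrier (local A) := Sub u (nbhd_id uA).
have eqv0 : env_equiv (local A) (local B) k.-1.+1 0 (fun _ => None) (fun _ => None).
  by rewrite prednK // => f fq f0; apply: tpAB => // y; apply/negP => /f0.
have [p2 eqv1] := env_equiv_forth eqv0 p1.
have p2B : val p2 \in B.
  have free0 y : free (FCol ord_max 0 : formula m.+1) y -> y < 1 by move/eqP ->.
  have := eqv1 (FCol ord_max 0) (leq0n _) free0.
  by rewrite /= !inE /= !expand_max => - [/(_ uA)].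
have := (inv_sat (inv_init (p1 := p1) x uA p2B eqv1) qphi).1 su.
by exists (val p2); split; rewrite /= ?upd_same ?expand_max // -/(marked B); apply/sat_lift.
Qed.

End Transfer.
End Locality.

Theorem lemma4p12 (m : nat) (T : finType) (e : rel T) (col : 'I_m -> {set T})
  (k : nat) (A B : {set T}) :
  symmetric e -> irreflexive e -> 1 <= k ->
  dist_gt e A B (2 ^ k) ->
  tp_eq k
    (induced (graph_struct e (expand col A)) (nbhd e (2 ^ k.-1 - 1) A))
    (induced (graph_struct e (expand col B)) (nbhd e (2 ^ k.-1 - 1) B)) ->
  forall (phi : formula m) (x : nat),
    (forall y, free phi y -> y = x) -> qr phi <= k.-1 ->
    (models (graph_struct e (expand col A)) (ex_in_new x phi) <->
     models (graph_struct e (expand col B)) (ex_in_new x phi)).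
Proof.
move=> e_sym _ k_gt0 dist_AB tpAB phi x _ qphi; split.
  exact: (exists_in_transfer e_sym k_gt0 dist_AB tpAB qphi).
apply: (exists_in_transfer e_sym k_gt0 (dist_gt_sym e_sym dist_AB) _ qphi).
by move=> f fs fq; symmetry; apply: tpAB.
Qed.
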